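(* Let $A,B\subset\mathbb{R}^n$ be set-germs at $0$ with $0\in\overline{A}\cap\overline{B}$, and let $h:(\mathbb{R}^n,0)\to(\mathbb{R}^n,0)$ be a bi-Lipschitz homeomorphism germ. Suppose that $A$ or $B$ satisfies condition (SSP), and that $h(A)$ or $h(B)$ satisfies condition (SSP). Then $A$ and $B$ are weakly transverse at $0$ if and only if $h(A)$ and $h(B)$ are weakly transverse at $0$.
   Context: For a set-germ $A\subset\mathbb{R}^n$ at $0$ with $0\in\overline A$, the direction set is $D(A)=\{a\in S^{n-1}:\exists\, x_i\in A\setminus\{0\},\ x_i\to0,\ x_i/\|x_i\|\to a\}$, where $S^{n-1}$ is the unit sphere. For sequences, $\|u_m\|\ll\|v_m\|,\|w_m\|$ means $\|u_m\|/\|v_m\|\to0$ and $\|u_m\|/\|w_m\|\to0$. A set-germ $A$ with $0\in\overline A$ satisfies condition (SSP) if for every sequence $a_m\in\mathbb{R}^n$ tending to $0$ with $\lim a_m/\|a_m\|\in D(A)$ there is a sequence $b_m\in A$ with $\|a_m-b_m\|\ll\|a_m\|,\|b_m\|$. $A$ and $B$ are weakly transverse at $0$ if $D(A)\cap D(B)=\emptyset$. A bi-Lipschitz homeomorphism germ $h$ is a homeomorphism germ with $h(0)=0$ and constants $0<K_1\le K_2$ with $K_1\|x-y\|\le\|h(x)-h(y)\|\le K_2\|x-y\|$ near $0$. *)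

From HB Require Import structures.
From mathcomp Require Import all_boot all_order all_algebra.
From mathcomp Require Import classical_sets reals.
Set Implicit Arguments. Unset Strict Implicit. Unset Printing Implicit Defensive.
Import Order.TTheory GRing.Theory Num.Theory.
Local Open Scope ring_scope.
Local Open Scope classical_set_scope.

Section Defs.
Variables (R : realType) (n : nat).
Notation vec := 'rV[R]_n.

Definition enorm (x : vec) : R := Num.sqrt (\sum_(i < n) x ord0 i ^+ 2).

Definition dirv (x : vec) : vec := (enorm x)^-1 *: x.

Definition rseq_to0 (u : nat -> R) : Prop :=
  forall e : R, 0 < e -> exists N : nat, forall m, (N <= m)%N -> `|u m| < e.

Definition vseq_to (u : nat -> vec) (l : vec) : Prop :=
  forall e : R, 0 < e -> exists N : nat, forall m, (N <= m)%N -> enorm (u m - l) < e.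

Definition zero_in_closure (A : set vec) : Prop :=
  forall e : R, 0 < e -> exists x, A x /\ enorm x < e.

Definition dirset (A : set vec) : set vec :=
  [set a | enorm a = 1 /\
    exists x : nat -> vec, (forall m, A (x m) /\ x m != 0) /\
      vseq_to x 0 /\ vseq_to (fun m => dirv (x m)) a].

Definition SSP (A : set vec) : Prop :=
  forall a : nat -> vec, vseq_to a 0 ->
    (exists d, dirset A d /\ vseq_to (fun m => dirv (a m)) d) ->
    exists b : nat -> vec, (forall m, A (b m)) /\
      rseq_to0 (fun m => enorm (a m - b m) / enorm (a m)) /\
      rseq_to0 (fun m => enorm (a m - b m) / enorm (b m)).

Definition weakly_transverse (A B : set vec) : Prop :=
  dirset A `&` dirset B = set0.

(* h is a bi-Lipschitz homeomorphism germ at 0, realised on the open ball of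
   radius r: h 0 = 0, h is bi-Lipschitz on the ball, and h(ball) contains a
   neighbourhood of 0 (so h restricted to the ball is a homeomorphism onto an
   open neighbourhood of 0). *)
Definition biLipschitz_germ (h : vec -> vec) (r : R) : Prop :=
  0 < r /\ h 0 = 0 /\
  (exists K1 K2 : R, 0 < K1 /\ K1 <= K2 /\
     forall x y, enorm x < r -> enorm y < r ->
       K1 * enorm (x - y) <= enorm (h x - h y) /\
       enorm (h x - h y) <= K2 * enorm (x - y)) /\
  (exists s : R, 0 < s /\ forall y, enorm y < s -> exists x, enorm x < r /\ h x = y).

Definition germ_image (h : vec -> vec) (r : R) (A : set vec) : set vec :=
  h @` (A `&` [set x | enorm x < r]).

End Defs.

(* A direction of A common to A and B is seen along a sequence y_m of B; SSP of A
   provides points b_m of A with |y_m - b_m| = o(|y_m|).  A bi-Lipschitz map keeps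
   |h y_m - h b_m| = o(|h y_m|), so h y_m and h b_m have the same limiting directions,
   and any cluster point of the directions of h y_m (there is one, by compactness of
   the sphere) lies in D(h A) and in D(h B).  The converse is the same argument
   applied to the inverse of h on its image. *)
From HB Require Import structures.
From mathcomp Require Import all_boot all_order all_algebra interval_inference.
From mathcomp Require Import boolp classical_sets reals topology normedtype.
From mathcomp Require Import ring lra.
Import Order.TTheory GRing.Theory Num.Theory numFieldNormedType.Exports.
Local Open Scope ring_scope.
Local Open Scope classical_set_scope.
Set Implicit Arguments. Unset Strict Implicit.

Section EuclideanNorm.
Variables (R : realType) (n : nat).
Notation vec := 'rV[R]_n.
Notation sqsum x := (\sum_(i < n) (x : vec) ord0 i ^+ 2).

Lemma sqsum_ge0 (x : vec) : 0 <= sqsum x.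
Proof. by apply: sumr_ge0 => i _; rewrite sqr_ge0. Qed.

Lemma enorm_ge0 (x : vec) : 0 <= enorm x.
Proof. exact: sqrtr_ge0. Qed.

Lemma enorm0 : enorm (0 : vec) = 0.
Proof. by rewrite /enorm big1 ?sqrtr0 // => i _; rewrite mxE expr0n. Qed.

Lemma enorm_eq0 (x : vec) : enorm x = 0 -> x = 0.
Proof.
move=> /eqP; rewrite sqrtr_eq0 => x_le0.
have x0 : sqsum x = 0 by apply/eqP; rewrite eq_le x_le0 sqsum_ge0.
apply/rowP => i; rewrite mxE.
have /eqP := psumr_eq0P (fun i _ => sqr_ge0 (x ord0 i)) x0 (i:=i) isT.
by rewrite sqrf_eq0 => /eqP.
Qed.

Lemma enorm_gt0 (x : vec) : x != 0 -> 0 < enorm x.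
Proof.
move=> x0; rewrite lt_neqAle enorm_ge0 andbT eq_sym.
by apply: contraNneq x0 => /enorm_eq0 ->.
Qed.

Lemma enormN (x : vec) : enorm (- x) = enorm x.
Proof. by rewrite /enorm; congr Num.sqrt; apply: eq_bigr => i _; rewrite mxE sqrrN. Qed.

Lemma enorm_distC (x y : vec) : enorm (x - y) = enorm (y - x).
Proof. by rewrite -enormN opprB. Qed.

Lemma enormZ (k : R) (x : vec) : enorm (k *: x) = `|k| * enorm x.
Proof.
rewrite /enorm -sqrtr_sqr -sqrtrM ?sqr_ge0 // mulr_sumr; congr Num.sqrt.
by apply: eq_bigr => i _; rewrite mxE exprMn.
Qed.

Lemma sqsum_affine (t : R) (x y : vec) :
  sqsum (t *: x + y) =
  t ^+ 2 * sqsum x + 2 * t * (\sum_(i < n) x ord0 i * y ord0 i) + sqsum y.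
Proof. by rewrite !mulr_sumr -!big_split /=; apply: eq_bigr => i _; rewrite !mxE; ring. Qed.

Lemma cauchy_schwarz (x y : vec) :
  (\sum_(i < n) x ord0 i * y ord0 i) ^+ 2 <= sqsum x * sqsum y.
Proof.
set D := \sum_(i < n) _.
have [x0|x_neq0] := eqVneq (sqsum x) 0.
  suff -> : D = 0 by rewrite x0 expr0n mul0r.
  rewrite /D big1 // => i _.
  have /eqP := psumr_eq0P (fun i _ => sqr_ge0 (x ord0 i)) x0 (i:=i) isT.
  by rewrite sqrf_eq0 => /eqP ->; rewrite mul0r.
have x_gt0 : 0 < sqsum x by rewrite lt_neqAle eq_sym x_neq0 sqsum_ge0.
(* the quadratic [t |-> sqsum (t x + y)] is nonnegative at its minimum *)
set q := D / sqsum x.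
have := sqsum_ge0 (- q *: x + y); rewrite sqsum_affine -/D.
have -> : D = q * sqsum x by rewrite divfK.
by have := sqsum_ge0 y; nra.
Qed.

Lemma enormD (x y : vec) : enorm (x + y) <= enorm x + enorm y.
Proof.
rewrite -[enorm x + enorm y]ger0_norm ?addr_ge0 ?enorm_ge0 //.
rewrite -sqrtr_sqr /enorm ler_sqrt ?sqr_ge0 // -[x]scale1r sqsum_affine scale1r.
set D := \sum_(i < n) x ord0 i * y ord0 i.
have sx := sqr_sqrtr (sqsum_ge0 x); have sy := sqr_sqrtr (sqsum_ge0 y).
have D_le : D <= Num.sqrt (sqsum x) * Num.sqrt (sqsum y).
  rewrite -sqrtrM ?sqsum_ge0 // (le_trans (ler_norm D)) //.
  by rewrite -sqrtr_sqr ler_sqrt ?mulr_ge0 ?sqsum_ge0 ?cauchy_schwarz.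
by rewrite expr1n mul1r mulr1; nra.
Qed.

Lemma enorm_lerB_dist (x y : vec) : `|enorm x - enorm y| <= enorm (x - y).
Proof.
have := enormD (x - y) y; have := enormD (y - x) x.
rewrite !subrK (enorm_distC y) ler_norml => ? ?; apply/andP; split; lra.
Qed.

Lemma coord_le_enorm (x : vec) i : `|x ord0 i| <= enorm x.
Proof.
rewrite -sqrtr_sqr /enorm ler_sqrt ?sqsum_ge0 // (bigD1 i) //= lerDl.
by apply: sumr_ge0 => j _; rewrite sqr_ge0.
Qed.

Lemma enorm_le_coord (x : vec) (e : R) : 0 <= e ->
  (forall i, `|x ord0 i| <= e) -> enorm x <= e * n%:R.
Proof.
move=> e0 x_le.
rewrite -[e * _]ger0_norm ?mulr_ge0 ?ler0n // -sqrtr_sqr /enorm ler_sqrt ?sqr_ge0 //.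
apply: (@le_trans _ _ (\sum_(i < n) e ^+ 2)).
  apply: ler_sum => i _; rewrite -real_normK ?num_real //.
  by rewrite lerXn2r ?nnegrE ?normr_ge0.
rewrite sumr_const card_ord exprMn -[e ^+ 2 *+ n]mulr_natr; apply: ler_wpM2l; first exact: sqr_ge0.
by rewrite expr2 -natrM ler_nat; case: (n) => // m; rewrite leq_pmull.
Qed.

Lemma enorm_dirv (x : vec) : x != 0 -> enorm (dirv x) = 1.
Proof.
move=> x0; rewrite /dirv enormZ ger0_norm ?invr_ge0 ?enorm_ge0 //.
by rewrite mulVf // gt_eqF // enorm_gt0.
Qed.

Lemma enorm_dirv_le1 (x : vec) : enorm (dirv x) <= 1.
Proof.
have [->|x0] := eqVneq x 0; last by rewrite enorm_dirv.
by rewrite /dirv scaler0 enorm0.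
Qed.

Lemma enorm_dirvB (p q : vec) : q != 0 ->
  enorm (dirv p - dirv q) <= 2 * enorm (p - q) / enorm q.
Proof.
move=> q0; have q_gt0 := enorm_gt0 q0.
set a := enorm p; set b := enorm q.
have -> : dirv p - dirv q = b^-1 *: (p - q) + (a^-1 - b^-1) *: p.
  by rewrite /dirv -/a -/b scalerBr scalerBl [RHS]addrC addrA subrK.
apply: le_trans (enormD _ _) _.
rewrite !enormZ ger0_norm ?invr_ge0 ?enorm_ge0 //.
have : `|a^-1 - b^-1| * a <= enorm (p - q) / b.
  have [->|a0] := eqVneq a 0; first by rewrite mulr0 divr_ge0 ?enorm_ge0 ?ltW.
  rewrite -[X in _ * X]ger0_norm ?enorm_ge0 // -normrM.
  have -> : (a^-1 - b^-1) * a = (b - a) / b by field; rewrite a0 gt_eqF.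
  rewrite normrM [`|b^-1|]ger0_norm; last by rewrite invr_ge0 ltW.
  by rewrite ler_pM2r ?invr_gt0 // distrC enorm_lerB_dist.
by rewrite -/a mulrC; lra.
Qed.

End EuclideanNorm.

Section Sequences.
Variables (R : realType) (n : nat).
Notation vec := 'rV[R]_n.

Lemma rseq_to0P (u : nat -> R) :
  rseq_to0 u <-> forall e : R, 0 < e -> \forall m \near \oo, `|u m| < e.
Proof.
by split=> [u0 e /u0 [N uN]|u0 e /u0 [N _ uN]]; exists N.
Qed.

Lemma vseq_to0_enorm (u : nat -> vec) :
  vseq_to u 0 <-> rseq_to0 (fun m => enorm (u m)).
Proof.
by split=> u0 e /u0 [N uN]; exists N => m /uN; rewrite ?subr0 ger0_norm ?enorm_ge0.
Qed.

Lemma rseq_to0_le (u v : nat -> R) (C : R) : 0 < C -> rseq_to0 u ->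
  (\forall m \near \oo, `|v m| <= C * `|u m|) -> rseq_to0 v.
Proof.
move=> C_gt0 /rseq_to0P u0 vu; apply/rseq_to0P => e e_gt0.
near=> m; apply: le_lt_trans (near vu m _) _ => //.
by rewrite -ltr_pdivlMl //; near: m; apply: u0; rewrite mulr_gt0 ?invr_gt0.
Unshelve. all: by end_near.
Qed.

Definition cluster_point (u : nat -> vec) (c : vec) : Prop :=
  forall e : R, 0 < e -> forall N, exists2 m, (N <= m)%N & enorm (u m - c) < e.

Lemma bounded_cluster_point (u : nat -> vec) (M : R) :
  (forall m, enorm (u m) <= M) -> exists c, cluster_point u c.
Proof.
move=> u_le.
have [|c [_ u_c]] := @rV_compact R n (fun=> `[- M, M]%classic)
  (fun=> @segment_compact R _ _) (fmap u \oo) _.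
  exists 0%N => // m _ i /=; rewrite in_itv /= -ler_norml.
  exact: le_trans (coord_le_enorm _ _) (u_le m).
exists c => e e_gt0 N.
have e'_gt0 : 0 < e / (n%:R + 1) by rewrite divr_gt0 // ltr_wpDl.
have [_ [[m Nm <-] um]] := u_c [set u m | m in [set m | (N <= m)%N]]
  (ball c (e / (n%:R + 1))) (ex_intro2 _ _ N I (fun m Nm => ex_intro2 _ _ m Nm erefl))
  (nbhsx_ballx c _ e'_gt0).
exists m => //.
apply: le_lt_trans (enorm_le_coord (ltW e'_gt0) _) _.
  move=> i; have [_ /(_ ord0 i)] := um.
  by rewrite /ball /= distrC !mxE => /ltW.
by rewrite mulrAC ltr_pdivrMr ?ltr_wpDl // ltr_pM2l // ltrDl.
Qed.

Lemma cluster_point_close (u v : nat -> vec) (c : vec) :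
  cluster_point u c -> vseq_to (fun m => v m - u m) 0 -> cluster_point v c.
Proof.
move=> uc /vseq_to0_enorm/rseq_to0P vu e e_gt0 N.
have e2_gt0 : 0 < e / 2 by lra.
have [N1 _ vuN] := vu _ e2_gt0.
have [m Nm um] := uc _ e2_gt0 (maxn N N1).
exists m; first exact: leq_trans (leq_maxl _ _) Nm.
have := vuN m (leq_trans (leq_maxr _ _) Nm); rewrite ger0_norm ?enorm_ge0 //.
by have := enormD (v m - u m) (u m - c); rewrite addrA subrK; lra.
Qed.

End Sequences.

Section Directions.
Variables (R : realType) (n : nat).
Notation vec := 'rV[R]_n.

Definition common_direction (A B : set vec) : Prop :=
  exists d, dirset A d /\ dirset B d.

Lemma common_directionC (A B : set vec) :
  common_direction A B -> common_direction B A.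
Proof. by move=> [d [dA dB]]; exists d. Qed.

Lemma weakly_transverseP (A B : set vec) :
  weakly_transverse A B <-> ~ common_direction A B.
Proof.
split=> [AB0 [d ABd]|noAB]; first by have : (dirset A `&` dirset B) d by []; rewrite AB0.
by apply/seteqP; split=> // d ABd; apply: noAB; exists d.
Qed.

Lemma dirset_approx (S : set vec) (c : vec) : enorm c = 1 ->
  (forall e : R, 0 < e ->
     exists x, [/\ S x, x != 0, enorm x < e & enorm (dirv x - c) < e]) ->
  dirset S c.
Proof.
move=> c1 approx; split => //.
have /choice [x xP] : forall k : nat, exists x, [/\ S x, x != 0,
    enorm x < k.+1%:R^-1 & enorm (dirv x - c) < k.+1%:R^-1].
  by move=> k; apply: approx; rewrite invr_gt0 ltr0Sn.
exists x; split; first by move=> m; have [] := xP m.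
split=> e e_gt0; have [N _ invN] := near_infty_natSinv_lt (PosNum e_gt0);
  exists N => m /invN /= inv_lt; have [_ _ xm dm] := xP m.
- by rewrite subr0 (lt_trans xm).
- exact: lt_trans dm inv_lt.
Qed.

Lemma dirset_cluster (S : set vec) (z : nat -> vec) (c : vec) :
  (\forall m \near \oo, S (z m)) -> (\forall m \near \oo, z m != 0) ->
  vseq_to z 0 -> cluster_point (fun m => dirv (z m)) c -> dirset S c.
Proof.
move=> zS_near z_neq0 /vseq_to0_enorm/rseq_to0P z0 zc.
have [N0 _ zS] : \forall m \near \oo, S (z m) /\ z m != 0.
  by near=> m; split; near: m.
have approx (e : R) : 0 < e ->
    exists2 m, (N0 <= m)%N /\ enorm (z m) < e & enorm (dirv (z m) - c) < e.
  move=> e_gt0; have [N1 _ zN] := z0 _ e_gt0.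
  have [m Nm dm] := zc _ e_gt0 (maxn N0 N1); exists m => //; split.
    exact: leq_trans (leq_maxl _ _) Nm.
  by have := zN m (leq_trans (leq_maxr _ _) Nm); rewrite ger0_norm ?enorm_ge0.
have c1 : enorm c = 1.
  apply/eqP; apply/negPn/negP => c_neq1.
  have [|m [N0m _] dm] := approx `|enorm c - 1|; first by rewrite normr_gt0 subr_eq0.
  have := enorm_lerB_dist (dirv (z m)) c.
  by rewrite enorm_dirv ?(zS m N0m).2 // distrC => /(lt_le_trans dm); rewrite ltxx.
apply: dirset_approx => // e e_gt0; have [m [N0m zm] dm] := approx e e_gt0.
by have [Sz zm_neq0] := zS m N0m; exists (z m).
Unshelve. all: by end_near.
Qed.

Lemma close_seq_to0 (z w : nat -> vec) :
  (\forall m \near \oo, z m != 0) -> vseq_to z 0 ->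
  rseq_to0 (fun m => enorm (z m - w m) / enorm (z m)) ->
  vseq_to w 0 /\ \forall m \near \oo, w m != 0.
Proof.
move=> z_neq0 z0 /rseq_to0P ratio.
have ltr0_half : 0 < 1 / 2 :> R by lra.
have half : \forall m \near \oo, enorm (z m - w m) < enorm (z m) / 2.
  near=> m.
  have zm_gt0 : 0 < enorm (z m) by apply: enorm_gt0; near: m.
  have : `|enorm (z m - w m) / enorm (z m)| < 1 / 2 by near: m; exact: ratio.
  by rewrite ger0_norm ?divr_ge0 ?enorm_ge0 // ltr_pdivrMr //; lra.
split.
  apply/vseq_to0_enorm; apply: (rseq_to0_le (C := 2)) (iffLR (vseq_to0_enorm _) z0) _ => //.
  near=> m; rewrite !ger0_norm ?enorm_ge0 //.
  have : enorm (z m - w m) < enorm (z m) / 2 by near: m.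
  by have := enorm_lerB_dist (z m) (w m); rewrite ler_norml => /andP[]; lra.
near=> m; have : enorm (z m - w m) < enorm (z m) / 2 by near: m.
have zm_gt0 : 0 < enorm (z m) by apply: enorm_gt0; near: m.
by apply: contraTneq => ->; rewrite subr0 -leNgt; lra.
Unshelve. all: by end_near.
Qed.

Lemma common_direction_of_close (A B : set vec) (z w : nat -> vec) :
  (\forall m \near \oo, A (w m)) -> (\forall m \near \oo, B (z m)) ->
  (\forall m \near \oo, z m != 0) -> vseq_to z 0 ->
  rseq_to0 (fun m => enorm (z m - w m) / enorm (z m)) ->
  common_direction A B.
Proof.
move=> wA zB z_neq0 z0 ratio.
have [w0 w_neq0] := close_seq_to0 z_neq0 z0 ratio.
have [c zc] := bounded_cluster_point (fun m => enorm_dirv_le1 (z m)).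
have wc : cluster_point (fun m => dirv (w m)) c.
  apply: (cluster_point_close zc); apply/vseq_to0_enorm.
  apply: (rseq_to0_le (C := 2)) ratio _ => //; near=> m.
  rewrite ger0_norm ?enorm_ge0 // ger0_norm ?divr_ge0 ?enorm_ge0 //.
  rewrite mulrA [enorm (z m - w m)]enorm_distC.
  by apply: enorm_dirvB; near: m.
by exists c; split; [exact: dirset_cluster wc | exact: dirset_cluster zc].
Unshelve. all: by end_near.
Qed.

End Directions.

Section BiLipschitzTransfer.
Variables (R : realType) (n : nat).
Notation vec := 'rV[R]_n.
Variables (P : vec -> vec -> Prop) (K1 K2 s : R).
Hypotheses (K1_gt0 : 0 < K1) (K2_gt0 : 0 < K2) (s_gt0 : 0 < s) (P00 : P 0 0).
Hypothesis P_biLipschitz : forall x y z w, P x z -> P y w ->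
  K1 * enorm (x - y) <= enorm (z - w) /\ enorm (z - w) <= K2 * enorm (x - y).

Definition lifts (A A' : set vec) : Prop :=
  forall x, A x -> enorm x < s -> exists2 z, A' z & P x z.

Lemma P_enorm (x z : vec) : P x z -> K1 * enorm x <= enorm z /\ enorm z <= K2 * enorm x.
Proof. by move=> Pxz; have := P_biLipschitz Pxz P00; rewrite !subr0. Qed.

Lemma lift_seq (A A' : set vec) (y : nat -> vec) :
  lifts A A' -> (forall m, A (y m)) -> vseq_to y 0 ->
  exists z : nat -> vec,
    (\forall m \near \oo, A' (z m)) /\ \forall m \near \oo, P (y m) (z m).
Proof.
move=> liftA yA /vseq_to0_enorm/rseq_to0P y0.
have /choice [z zP] : forall m, exists z, enorm (y m) < s -> A' z /\ P (y m) z.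
  move=> m; have [ys|ys] := pselect (enorm (y m) < s); last by exists 0 => /ys.
  by have [z] := liftA _ (yA m) ys; exists z.
have ys : \forall m \near \oo, enorm (y m) < s.
  by near=> m; rewrite -[enorm _]ger0_norm ?enorm_ge0 //; near: m; exact: y0.
by exists z; split; near=> m; have [] := zP m; by [|near: m].
Unshelve. all: by end_near.
Qed.

Lemma lifted_ratio (x y z w : vec) : x != 0 -> P x z -> P y w ->
  enorm (z - w) / enorm z <= K2 / K1 * (enorm (x - y) / enorm x).
Proof.
move=> x_neq0 Pxz Pyw; have x_gt0 := enorm_gt0 x_neq0.
have [z_ge _] := P_enorm Pxz; have [_ zw_le] := P_biLipschitz Pxz Pyw.
have z_gt0 : 0 < enorm z by apply: lt_le_trans z_ge; rewrite mulr_gt0.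
rewrite ler_pdivrMr // (le_trans zw_le) //.
have -> : K2 * enorm (x - y) = K2 / K1 * (enorm (x - y) / enorm x) * (K1 * enorm x).
  by field; rewrite !gt_eqF.
by rewrite ler_wpM2l // mulr_ge0 ?divr_ge0 ?enorm_ge0 ?ltW.
Qed.

Lemma SSP_common_direction_lift (A B A' B' : set vec) :
  lifts A A' -> lifts B B' -> SSP A ->
  common_direction A B -> common_direction A' B'.
Proof.
move=> liftA liftB sspA [d [dA [_ [y [yB [y0 yd]]]]]].
have [b [bA [ratio _]]] := sspA y y0 (ex_intro _ d (conj dA yd)).
have y_neq0 : \forall m \near \oo, y m != 0 by exists 0%N => // m _; have [] := yB m.
have [b0 _] := close_seq_to0 y_neq0 y0 ratio.
have [z [zB' Pyz]] := lift_seq liftB (fun m => (yB m).1) y0.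
have [w [wA' Pbw]] := lift_seq liftA bA b0.
apply: (common_direction_of_close wA' zB').
- near=> m; have y_gt0 : 0 < enorm (y m) by apply: enorm_gt0; near: m.
  have Pm : P (y m) (z m) by near: m.
  have [z_ge _] := P_enorm Pm.
  by apply: contra_leN z_ge => /eqP ->; rewrite enorm0 mulr_gt0.
- apply/vseq_to0_enorm.
  apply: (rseq_to0_le (C := K2)) (iffLR (vseq_to0_enorm _) y0) _ => //.
  near=> m; rewrite !ger0_norm ?enorm_ge0 //.
  have Pm : P (y m) (z m) by near: m.
  by have [] := P_enorm Pm.
- apply: (rseq_to0_le (C := K2 / K1)) ratio _; first by rewrite divr_gt0.
  near=> m; rewrite !ger0_norm ?divr_ge0 ?enorm_ge0 //.
  by apply: lifted_ratio; near: m.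
Unshelve. all: by end_near.
Qed.

Lemma common_direction_lift (A B A' B' : set vec) :
  lifts A A' -> lifts B B' -> SSP A \/ SSP B ->
  common_direction A B -> common_direction A' B'.
Proof.
move=> liftA liftB [sspA|sspB] AB; first exact: SSP_common_direction_lift AB.
exact: common_directionC (SSP_common_direction_lift liftB liftA sspB (common_directionC AB)).
Qed.

End BiLipschitzTransfer.

Theorem theorem3p5 (R : realType) (n : nat) (A B : set 'rV[R]_n)
  (h : 'rV[R]_n -> 'rV[R]_n) (r : R) :
  zero_in_closure A -> zero_in_closure B ->
  biLipschitz_germ h r ->
  (SSP A \/ SSP B) ->
  (SSP (germ_image h r A) \/ SSP (germ_image h r B)) ->
  (weakly_transverse A B <->
   weakly_transverse (germ_image h r A) (germ_image h r B)).
Proof.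
(* [0] adheres to [A] and [B] automatically whenever they have a direction. *)
move=> _ _ [r_gt0 [h0 [[K1 [K2 [K1_gt0 [K12 hK]]]] _]]] sspAB sspH.
have K2_gt0 : 0 < K2 := lt_le_trans K1_gt0 K12.
pose graph x z := enorm x < r /\ z = h x.
have graph00 : graph 0 0 by rewrite /graph enorm0 h0.
have graph_biLipschitz x y z w : graph x z -> graph y w ->
    K1 * enorm (x - y) <= enorm (z - w) /\ enorm (z - w) <= K2 * enorm (x - y).
  by move=> [xr ->] [yr ->]; exact: hK.
have graphV_biLipschitz z w x y : graph x z -> graph y w ->
    K2^-1 * enorm (z - w) <= enorm (x - y) /\ enorm (x - y) <= K1^-1 * enorm (z - w).
  by move=> /graph_biLipschitz /[apply] -[? ?]; rewrite ler_pdivrMl // ler_pdivlMl.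
have graph_lifts X : lifts graph r X (germ_image h r X).
  by move=> x Xx xr; exists (h x) => //; exists x.
have graphV_lifts X : lifts (fun z x => graph x z) 1 (germ_image h r X) X.
  by move=> _ [x [Xx xr] <-] _; exists x.
rewrite !weakly_transverseP; split=> noAB common; apply: noAB.
- apply: (common_direction_lift (P := fun z x => graph x z) _ _ ltr01 graph00 graphV_biLipschitz
    (graphV_lifts A) (graphV_lifts B) sspH common); by rewrite invr_gt0.
- exact: (common_direction_lift K1_gt0 K2_gt0 r_gt0 graph00 graph_biLipschitz
    (graph_lifts A) (graph_lifts B) sspAB common).
Qed.
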